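(* Let $N\ge 1$, $a_1,\dots,a_N>0$, $T_1,\dots,T_N\ge 0$, $P_{\mathrm{tot}}>0$, $c=\ln 2$, $\bar P_i=(2^{T_i}-1)/a_i$, and for $\lambda>0$ let $P_i(\lambda)=\frac{2}{\lambda c^2}W_0\!\left(\frac{\lambda c^2}{2a_i}2^{T_i}\right)-\frac1{a_i}$, $P_i^*(\lambda)=\min\{\bar P_i,\max\{0,P_i(\lambda)\}\}$ and $S(\lambda)=\sum_i P_i^*(\lambda)$, where $W_0$ is the principal branch of the Lambert W function. Consider the following algorithm with tolerance $\varepsilon>0$: if $P_{\mathrm{tot}}\ge\sum_i\bar P_i$, return $P_i=\bar P_i$; otherwise set $\lambda_{\mathrm{lo}}=0$, $\lambda_{\mathrm{hi}}=1$, and while $S(\lambda_{\mathrm{hi}})>P_{\mathrm{tot}}$ replace $\lambda_{\mathrm{hi}}$ by $2\lambda_{\mathrm{hi}}$; then repeat: set $\lambda=(\lambda_{\mathrm{lo}}+\lambda_{\mathrm{hi}})/2$, compute $P_i^*(\lambda)$ for all $i$ and $S(\lambda)$, set $\lambda_{\mathrm{lo}}=\lambda$ if $S(\lambda)>P_{\mathrm{tot}}$ and $\lambda_{\mathrm{hi}}=\lambda$ otherwise, until $|S(\lambda)-P_{\mathrm{tot}}|<\varepsilon$; return $(P_i^*(\lambda))_i$ and $\lambda$. Suppose $P_{\mathrm{tot}}<\sum_i\bar P_i$ and at least one channel has $a_i,T_i>0$. Then, for fixed problem data, the algorithm terminates after at most $O(\log(1/\varepsilon))$ bisection iterations; each iteration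 requires $N$ Lambert W evaluations and $O(N)$ elementary operations, for a total complexity of $O(N\log(1/\varepsilon))$.
   Context: For $z\ge 0$, $W_0(z)$ is the unique $w\ge 0$ with $we^w=z$; a Lambert W evaluation is counted as a unit-cost operation. *)

From Stdlib Require Import Reals Lra Lia ClassicalEpsilon.
Open Scope R_scope.

(* Principal branch of Lambert W on z >= 0: the unique w >= 0 with w e^w = z.
   (Arbitrary value elsewhere; only used at z > 0.) *)
Definition W0 (z : R) : R :=
  epsilon (inhabits 0) (fun w => 0 <= w /\ w * exp w = z).

Definition c : R := ln 2.

Definition Pbar (a T : R) : R := (Rpower 2 T - 1) / a.

Definition Plam (a T lam : R) : R :=
  2 / (lam * c ^ 2) * W0 (lam * c ^ 2 / (2 * a) * Rpower 2 T) - 1 / a.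

Definition Pstar (a T lam : R) : R := Rmin (Pbar a T) (Rmax 0 (Plam a T lam)).

Fixpoint sumN (f : nat -> R) (n : nat) : R :=
  match n with
  | O => 0
  | S n' => sumN f n' + f n'
  end.

Definition Ssum (N : nat) (a T : nat -> R) (lam : R) : R :=
  sumN (fun i => Pstar (a i) (T i) lam) N.

Fixpoint bis (Sf : R -> R) (Ptot hi0 : R) (k : nat) : R * R :=
  match k with
  | O => (0, hi0)
  | S k' =>
      let '(lo, hi) := bis Sf Ptot hi0 k' in
      let lam := (lo + hi) / 2 in
      if Rlt_dec Ptot (Sf lam) then (lam, hi) else (lo, lam)
  end.

(* The lambda computed in bisection iteration number k+1 (k = 0,1,...). *)
Definition bis_mid (Sf : R -> R) (Ptot hi0 : R) (k : nat) : R :=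
  (fst (bis Sf Ptot hi0 k) + snd (bis Sf Ptot hi0 k)) / 2.

From Stdlib Require Import Reals ZArith Lra Lia Wf_nat ClassicalEpsilon Classical.
Open Scope R_scope.

(* Substituting W e^W = z turns P_i(lambda) into
   2^{T_i} e^{-W_0(lambda k_i)} / a_i - 1/a_i with k_i = c^2 2^{T_i} / (2 a_i),
   an expression that extends to lambda = 0 with value bar P_i.  Since
   w e^w grows at least as fast as w while e^{-w} shrinks at most as fast,
   e^{-W_0} is 1-Lipschitz on [0, oo); clamping preserves this, so S is
   L-Lipschitz on [0, oo) with S(0) = sum bar P_i > P_tot, and S vanishes for
   large lambda, so the doubling phase stops at some 2^m.  Bisection keeps
   S(lambda_lo) > P_tot >= S(lambda_hi) on an interval of width 2^{m-k},
   hence the residual at the k-th midpoint is at most L 2^{m-k}, which is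
   below eps as soon as k >= log2 (L 2^m / eps). *)

Lemma exp_le x y : x <= y -> exp x <= exp y.
Proof. intros [Hlt | ->]; [left; apply exp_increasing |]; lra. Qed.

Lemma c_pos : 0 < c.
Proof. unfold c. rewrite <- ln_1. apply ln_increasing; lra. Qed.

Lemma Rpower_2_pos T : 0 < Rpower 2 T.
Proof. apply exp_pos. Qed.

Lemma Rpower_2_ge_1 T : 0 <= T -> 1 <= Rpower 2 T.
Proof.
  intros HT. rewrite <- exp_0. apply exp_le.
  pose proof c_pos. unfold c in *. nra.
Qed.

Lemma W0_spec z : 0 <= z -> 0 <= W0 z /\ W0 z * exp (W0 z) = z.
Proof.
  intros Hz. unfold W0. apply epsilon_spec.
  destruct (Req_dec z 0) as [-> | Hne]; [exists 0; split; [lra | ring] |].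
  destruct (IVT (fun w => w * exp w - z) 0 z) as [w [[Hw0 Hwz] Hroot]].
  - apply continuity_minus; [| apply continuity_const; now intros ? ?].
    apply continuity_mult; apply derivable_continuous;
      [apply derivable_id | apply derivable_exp].
  - lra.
  - rewrite exp_0. lra.
  - pose proof (exp_ineq1_le z). nra.
  - exists w. split; [lra |]. lra.
Qed.

Lemma W0_0 : W0 0 = 0.
Proof.
  destruct (W0_spec 0 (Rle_refl 0)) as [Hnn Heq].
  pose proof (exp_pos (W0 0)). nra.
Qed.

Lemma exp_opp_W0_lipschitz_ordered x y : 0 <= x -> 0 <= y -> W0 x <= W0 y ->
  Rabs (exp (- W0 x) - exp (- W0 y)) <= Rabs (x - y).
Proof.
  intros Hx Hy Hle.
  destruct (W0_spec x Hx) as [Hw1 Hx_eq]. destruct (W0_spec y Hy) as [Hw2 Hy_eq].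
  set (w1 := W0 x) in *. set (w2 := W0 y) in *.
  assert (Hexp1 : 1 <= exp w1) by (pose proof (exp_ineq1_le w1); lra).
  assert (Hexp12 : exp w1 <= exp w2) by (apply exp_le; lra).
  assert (Hgap : w2 - w1 <= y - x) by nra.
  assert (Hsplit : exp (- w2) = exp (- w1) * exp (- (w2 - w1)))
    by (rewrite <- exp_plus; f_equal; ring).
  assert (Hdecay : 1 - (w2 - w1) <= exp (- (w2 - w1)))
    by (pose proof (exp_ineq1_le (- (w2 - w1))); lra).
  assert (Hsmall : exp (- w1) <= 1) by (rewrite <- exp_0; apply exp_le; lra).
  assert (Hpos : 0 < exp (- w1)) by apply exp_pos.
  assert (Hmono : exp (- w2) <= exp (- w1)) by (apply exp_le; lra).
  rewrite Rabs_pos_eq by lra. rewrite Rabs_minus_sym, Rabs_pos_eq by lra.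
  nra.
Qed.

Lemma exp_opp_W0_lipschitz x y : 0 <= x -> 0 <= y ->
  Rabs (exp (- W0 x) - exp (- W0 y)) <= Rabs (x - y).
Proof.
  intros Hx Hy. destruct (Rle_lt_dec (W0 x) (W0 y)).
  - now apply exp_opp_W0_lipschitz_ordered.
  - rewrite Rabs_minus_sym, (Rabs_minus_sym x).
    apply exp_opp_W0_lipschitz_ordered; auto; lra.
Qed.

Definition Wscale (a T : R) : R := c ^ 2 / (2 * a) * Rpower 2 T.

(* Unlike [Plam], whose factor [2 / (lam * c ^ 2)] is junk at [lam = 0],
   this form is continuous on [0, oo). *)
Definition Plam_ext (a T lam : R) : R :=
  Rpower 2 T / a * exp (- W0 (lam * Wscale a T)) - 1 / a.

Definition Pstar_ext (a T lam : R) : R := Rmin (Pbar a T) (Rmax 0 (Plam_ext a T lam)).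

Definition Pstar_lip (a T : R) : R := Rpower 2 T / a * Wscale a T.

Lemma Wscale_pos a T : 0 < a -> 0 < Wscale a T.
Proof.
  intros Ha. pose proof c_pos. pose proof (Rpower_2_pos T).
  apply Rmult_lt_0_compat; [apply Rdiv_lt_0_compat; nra | lra].
Qed.

Lemma Pstar_lip_nonneg a T : 0 < a -> 0 <= Pstar_lip a T.
Proof.
  intros Ha. pose proof (Wscale_pos a T Ha). pose proof (Rpower_2_pos T).
  apply Rmult_le_pos; [apply Rlt_le, Rdiv_lt_0_compat |]; lra.
Qed.

Lemma Pbar_nonneg a T : 0 < a -> 0 <= T -> 0 <= Pbar a T.
Proof.
  intros Ha HT. pose proof (Rpower_2_ge_1 T HT).
  apply Rmult_le_pos; [lra | apply Rlt_le, Rinv_0_lt_compat; lra].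
Qed.

Lemma Plam_eq_ext a T lam : 0 < a -> 0 < lam -> Plam a T lam = Plam_ext a T lam.
Proof.
  intros Ha Hlam. pose proof c_pos. pose proof (Wscale_pos a T Ha).
  destruct (W0_spec (lam * Wscale a T)) as [_ Hfix]; [nra |].
  unfold Plam, Plam_ext.
  replace (lam * c ^ 2 / (2 * a) * Rpower 2 T) with (lam * Wscale a T)
    by (unfold Wscale; field; lra).
  set (w := W0 (lam * Wscale a T)) in *.
  assert (Hw : w = lam * Wscale a T * exp (- w)).
  { rewrite <- Hfix, Rmult_assoc, <- exp_plus, Rplus_opp_r, exp_0. ring. }
  rewrite Hw at 1. unfold Wscale. field. lra.
Qed.

Lemma Pstar_eq_ext a T lam : 0 < a -> 0 < lam -> Pstar a T lam = Pstar_ext a T lam.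
Proof. intros. unfold Pstar, Pstar_ext. now rewrite Plam_eq_ext. Qed.

Lemma Pstar_ext_0 a T : 0 < a -> 0 <= T -> Pstar_ext a T 0 = Pbar a T.
Proof.
  intros Ha HT. pose proof (Pbar_nonneg a T Ha HT).
  unfold Pstar_ext, Plam_ext. rewrite Rmult_0_l, W0_0, Ropp_0, exp_0.
  replace (Rpower 2 T / a * 1 - 1 / a) with (Pbar a T) by (unfold Pbar; field; lra).
  unfold Rmin, Rmax. repeat destruct Rle_dec; lra.
Qed.

Lemma Rmin_Rmax_lipschitz p u v :
  Rabs (Rmin p (Rmax 0 u) - Rmin p (Rmax 0 v)) <= Rabs (u - v).
Proof. unfold Rmin, Rmax, Rabs. repeat destruct Rle_dec; repeat destruct Rcase_abs; lra. Qed.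

Lemma Pstar_ext_lipschitz a T x y : 0 < a -> 0 <= x -> 0 <= y ->
  Rabs (Pstar_ext a T x - Pstar_ext a T y) <= Pstar_lip a T * Rabs (x - y).
Proof.
  intros Ha Hx Hy. pose proof (Wscale_pos a T Ha).
  assert (Hcoef : 0 < Rpower 2 T / a) by (apply Rdiv_lt_0_compat; auto using Rpower_2_pos).
  eapply Rle_trans; [apply Rmin_Rmax_lipschitz |].
  unfold Plam_ext, Pstar_lip.
  replace (Rpower 2 T / a * exp (- W0 (x * Wscale a T)) - 1 / a
           - (Rpower 2 T / a * exp (- W0 (y * Wscale a T)) - 1 / a))
    with (Rpower 2 T / a * (exp (- W0 (x * Wscale a T)) - exp (- W0 (y * Wscale a T))))
    by ring.
  rewrite Rabs_mult, Rabs_pos_eq, Rmult_assoc by lra.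
  apply Rmult_le_compat_l; [lra |].
  eapply Rle_trans; [apply exp_opp_W0_lipschitz; nra |].
  rewrite <- Rmult_minus_distr_r, Rabs_mult, (Rabs_pos_eq (Wscale a T)) by lra.
  lra.
Qed.

Lemma Pstar_ext_large a T lam : 0 < a -> 0 <= T ->
  T * c * exp (T * c) < lam * Wscale a T -> Pstar_ext a T lam = 0.
Proof.
  intros Ha HT Hlarge. pose proof c_pos. pose proof (Wscale_pos a T Ha).
  pose proof (Pbar_nonneg a T Ha HT).
  assert (0 <= T * c * exp (T * c))
    by (pose proof (exp_pos (T * c)); apply Rmult_le_pos; [apply Rmult_le_pos |]; lra).
  destruct (W0_spec (lam * Wscale a T)) as [Hw0 Hfix]; [lra |].
  set (w := W0 (lam * Wscale a T)) in *.
  assert (Hw : T * c < w).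
  { apply Rnot_le_lt. intros Hle.
    assert (exp w <= exp (T * c)) by now apply exp_le.
    pose proof (exp_pos w). nra. }
  assert (Hneg : Plam_ext a T lam < 0).
  { unfold Plam_ext. fold w. unfold Rpower. fold c.
    assert (Hprod : exp (T * c) * exp (- w) < 1).
    { rewrite <- exp_plus, <- exp_0. apply exp_increasing. lra. }
    replace (exp (T * c) / a * exp (- w) - 1 / a)
      with ((exp (T * c) * exp (- w) - 1) / a) by (field; lra).
    apply Rdiv_neg_pos; lra. }
  unfold Pstar_ext, Rmin, Rmax. repeat destruct Rle_dec; lra.
Qed.

Lemma sumN_ext f g n : (forall i, (i < n)%nat -> f i = g i) -> sumN f n = sumN g n.
Proof.
  induction n as [| n IH]; intros Hfg; simpl; [reflexivity |].
  rewrite IH by (intros; apply Hfg; lia). now rewrite Hfg by lia.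
Qed.

Lemma sumN_const_0 n : sumN (fun _ => 0) n = 0.
Proof. induction n as [| n IH]; simpl; [| rewrite IH]; ring. Qed.

Lemma sumN_nonneg f n : (forall i, (i < n)%nat -> 0 <= f i) -> 0 <= sumN f n.
Proof.
  induction n as [| n IH]; intros Hf; simpl; [lra |].
  assert (0 <= sumN f n) by (apply IH; intros; apply Hf; lia).
  pose proof (Hf n (Nat.lt_succ_diag_r n)). lra.
Qed.

Lemma sumN_ge_term f n i : (forall j, (j < n)%nat -> 0 <= f j) -> (i < n)%nat ->
  f i <= sumN f n.
Proof.
  induction n as [| n IH]; intros Hf Hi; simpl; [lia |].
  assert (0 <= sumN f n) by (apply sumN_nonneg; intros; apply Hf; lia).
  destruct (Nat.eq_dec i n) as [-> | Hne]; [lra |].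
  assert (f i <= sumN f n) by (apply IH; [intros; apply Hf |]; lia).
  pose proof (Hf n (Nat.lt_succ_diag_r n)). lra.
Qed.

Lemma sumN_lipschitz f g L n d : (forall i, (i < n)%nat -> Rabs (f i - g i) <= L i * d) ->
  Rabs (sumN f n - sumN g n) <= sumN L n * d.
Proof.
  induction n as [| n IH]; intros Hfg; simpl.
  - rewrite Rminus_0_r, Rabs_R0. lra.
  - assert (Rabs (sumN f n - sumN g n) <= sumN L n * d) by (apply IH; intros; apply Hfg; lia).
    pose proof (Hfg n (Nat.lt_succ_diag_r n)).
    replace (sumN f n + f n - (sumN g n + g n))
      with ((sumN f n - sumN g n) + (f n - g n)) by ring.
    eapply Rle_trans; [apply Rabs_triang |]. lra.
Qed.

Lemma first_index (P : nat -> Prop) n : P n ->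
  exists m, P m /\ (m <= n)%nat /\ forall j, (j < m)%nat -> ~ P j.
Proof.
  intros Hn.
  destruct (dec_inh_nat_subset_has_unique_least_element P (fun k => classic (P k)))
    as [m [[Hm Hleast] _]]; [now exists n |].
  exists m. split; [| split]; [assumption | now apply Hleast |].
  intros j Hj Pj. specialize (Hleast j Pj). lia.
Qed.

Lemma log2_ceiling x : 0 < x ->
  exists k, x <= 2 ^ k /\ INR k <= Rmax 0 (ln x / ln 2) + 1.
Proof.
  intros Hx. pose proof c_pos as Hln2. unfold c in Hln2.
  set (y := ln x / ln 2).
  destruct (archimed y) as [Hup1 Hup2].
  exists (Z.to_nat (up y)).
  assert (Hk : y <= INR (Z.to_nat (up y)) /\ INR (Z.to_nat (up y)) <= Rmax 0 y + 1).
  { destruct (Z_lt_le_dec (up y) 0) as [Hneg | Hnn].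
    - assert (IZR (up y) <= -1) by (apply IZR_le; lia).
      replace (Z.to_nat (up y)) with 0%nat by lia. simpl. pose proof (Rmax_l 0 y). lra.
    - rewrite INR_IZR_INZ, Z2Nat.id by assumption.
      pose proof (Rmax_r 0 y). lra. }
  split; [| tauto].
  rewrite <- (Rpower_pow _ 2), <- (exp_ln x) by lra.
  apply exp_le. replace (ln x) with (y * ln 2) by (unfold y; field; lra).
  apply Rmult_le_compat_r; lra.
Qed.

Lemma ln_inv_small_bounds M eps : 1 <= M -> 0 < eps -> eps < Rmin (/ exp 1) (/ M) ->
  1 < ln (1 / eps) /\ 0 <= ln (M / eps) <= 2 * ln (1 / eps).
Proof.
  intros HM Heps Hsmall.
  assert (Hinv : forall u, 0 < u -> eps < / u -> u < 1 / eps).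
  { intros u Hu Hlt. unfold Rdiv. rewrite Rmult_1_l, <- (Rinv_inv u).
    apply Rinv_lt_contravar; [apply Rmult_lt_0_compat, Rinv_0_lt_compat |]; assumption. }
  assert (Hl : 1 < ln (1 / eps)).
  { rewrite <- (ln_exp 1) at 1. apply ln_increasing; [apply exp_pos |].
    apply Hinv; [apply exp_pos |]. eapply Rlt_le_trans; [apply Hsmall | apply Rmin_l]. }
  assert (HlnM : ln M < ln (1 / eps)).
  { apply ln_increasing; [lra |]. apply Hinv; [lra |].
    eapply Rlt_le_trans; [apply Hsmall | apply Rmin_r]. }
  assert (HlnM0 : 0 <= ln M).
  { destruct (Req_dec M 1) as [-> | Hne]; [rewrite ln_1; lra |].
    rewrite <- ln_1. left. apply ln_increasing; lra. }
  replace (M / eps) with (M * (1 / eps)) by (field; lra).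
  rewrite ln_mult by (try apply Rdiv_lt_0_compat; lra).
  lra.
Qed.

Section Bisection.

Variables (Sfun Scont : R -> R) (Ptot hi0 L : R).
Hypothesis Sfun_eq_Scont : forall x, 0 < x -> Sfun x = Scont x.
Hypothesis hi0_pos : 0 < hi0.
Hypothesis L_nonneg : 0 <= L.
Hypothesis Scont_lipschitz : forall x y, 0 <= x -> 0 <= y -> Rabs (Scont x - Scont y) <= L * Rabs (x - y).
Hypothesis Scont_0 : Ptot < Scont 0.
Hypothesis Scont_hi0 : Scont hi0 <= Ptot.

Lemma bis_invariant k :
  let '(lo, hi) := bis Sfun Ptot hi0 k in
  0 <= lo /\ hi - lo = hi0 / 2 ^ k /\ Ptot < Scont lo /\ Scont hi <= Ptot.
Proof.
  induction k as [| k IH]; simpl; [repeat split; lra |].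
  destruct (bis Sfun Ptot hi0 k) as [lo hi]. destruct IH as [Hlo [Hwidth [Hslo Hshi]]].
  assert (0 < hi0 / 2 ^ k) by (apply Rdiv_lt_0_compat; [| apply pow_lt]; lra).
  assert (Hhalf : hi0 / (2 * 2 ^ k) = (hi - lo) / 2) by (rewrite Hwidth; field; apply pow_nonzero; lra).
  rewrite Hhalf.
  destruct (Rlt_dec Ptot (Sfun ((lo + hi) / 2))) as [Hgt | Hle];
    rewrite Sfun_eq_Scont in * by lra; repeat split; lra.
Qed.

Lemma bis_mid_error k : Rabs (Sfun (bis_mid Sfun Ptot hi0 k) - Ptot) <= L * hi0 / 2 ^ k.
Proof.
  pose proof (bis_invariant k) as Hinv. unfold bis_mid.
  destruct (bis Sfun Ptot hi0 k) as [lo hi]. destruct Hinv as [Hlo [Hwidth [Hslo Hshi]]]. simpl.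
  assert (0 < hi0 / 2 ^ k) by (apply Rdiv_lt_0_compat; [| apply pow_lt]; lra).
  replace (L * hi0 / 2 ^ k) with (L * (hi - lo)) by (rewrite Hwidth; field; apply pow_nonzero; lra).
  rewrite Sfun_eq_Scont by lra.
  pose proof (Scont_lipschitz ((lo + hi) / 2) lo ltac:(lra) Hlo) as Hleft.
  pose proof (Scont_lipschitz hi ((lo + hi) / 2) ltac:(lra) ltac:(lra)) as Hright.
  rewrite (Rabs_pos_eq ((lo + hi) / 2 - lo)) in Hleft by lra.
  rewrite (Rabs_pos_eq (hi - (lo + hi) / 2)) in Hright by lra.
  rewrite Rabs_minus_sym in Hleft, Hright.
  pose proof (Rle_abs (Scont lo - Scont ((lo + hi) / 2))).
  pose proof (Rle_abs (Scont ((lo + hi) / 2) - Scont hi)).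
  assert (0 <= L * ((lo + hi) / 2 - lo)) by (apply Rmult_le_pos; lra).
  assert (0 <= L * (hi - (lo + hi) / 2)) by (apply Rmult_le_pos; lra).
  replace (L * (hi - lo)) with (L * ((lo + hi) / 2 - lo) + L * (hi - (lo + hi) / 2)) by field.
  apply Rabs_le. lra.
Qed.

End Bisection.

Lemma first_hit_count (A : R) (e : nat -> R) : 0 <= A -> (forall k, e k <= A / 2 ^ k) ->
  forall eps, 0 < eps ->
  exists K, (1 <= K)%nat /\ e (K - 1)%nat < eps /\
    (forall k, (k < K - 1)%nat -> eps <= e k) /\
    (eps < Rmin (/ exp 1) (/ (A + 1)) -> INR K <= (2 / ln 2 + 2) * ln (1 / eps)).
Proof.
  intros HA He eps Heps. pose proof c_pos as Hln2. unfold c in Hln2.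
  destruct (log2_ceiling ((A + 1) / eps)) as [k0 [Hpow Hk0]]; [apply Rdiv_lt_0_compat; lra |].
  assert (Hhit : e k0 < eps).
  { eapply Rle_lt_trans; [apply He |].
    assert (0 < 2 ^ k0) by (apply pow_lt; lra).
    apply (Rmult_lt_reg_r (2 ^ k0)); [assumption |].
    replace (A / 2 ^ k0 * 2 ^ k0) with A by (field; lra).
    assert (A + 1 <= eps * 2 ^ k0).
    { replace (A + 1) with (eps * ((A + 1) / eps)) by (field; lra).
      apply Rmult_le_compat_l; lra. }
    lra. }
  destruct (first_index (fun k => e k < eps) k0 Hhit) as [ks [Hks [Hle Hmin]]].
  exists (S ks). rewrite Nat.sub_succ, Nat.sub_0_r.
  split; [lia |]. split; [assumption |]. split.
  { intros k Hk. apply Rnot_lt_le. now apply Hmin. }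
  intros Hsmall.
  destruct (ln_inv_small_bounds (A + 1) eps) as [Hl [Hy0 Hy]]; [lra | assumption | assumption |].
  assert (Hlog : ln ((A + 1) / eps) / ln 2 <= 2 / ln 2 * ln (1 / eps)).
  { replace (2 / ln 2 * ln (1 / eps)) with (2 * ln (1 / eps) * / ln 2) by (field; lra).
    apply Rmult_le_compat_r; [apply Rlt_le, Rinv_0_lt_compat |]; lra. }
  rewrite Rmax_right in Hk0 by (apply Rmult_le_pos; [| apply Rlt_le, Rinv_0_lt_compat]; lra).
  rewrite S_INR. apply le_INR in Hle. lra.
Qed.

Section Channels.

Variables (N : nat) (a T : nat -> R).
Hypothesis a_pos : forall i, (i < N)%nat -> 0 < a i.
Hypothesis T_nonneg : forall i, (i < N)%nat -> 0 <= T i.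

Definition Sext (lam : R) : R := sumN (fun i => Pstar_ext (a i) (T i) lam) N.

Definition Slip : R := sumN (fun i => Pstar_lip (a i) (T i)) N.

Lemma Slip_nonneg : 0 <= Slip.
Proof. apply sumN_nonneg. intros i Hi. apply Pstar_lip_nonneg; auto. Qed.

Lemma Ssum_eq_Sext lam : 0 < lam -> Ssum N a T lam = Sext lam.
Proof. intros Hlam. apply sumN_ext. intros i Hi. apply Pstar_eq_ext; auto. Qed.

Lemma Sext_lipschitz x y : 0 <= x -> 0 <= y -> Rabs (Sext x - Sext y) <= Slip * Rabs (x - y).
Proof. intros Hx Hy. apply sumN_lipschitz. intros i Hi. apply Pstar_ext_lipschitz; auto. Qed.

Lemma Sext_0 : Sext 0 = sumN (fun i => Pbar (a i) (T i)) N.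
Proof. apply sumN_ext. intros i Hi. apply Pstar_ext_0; auto. Qed.

Lemma Ssum_pow2_eventually_0 : exists n, Ssum N a T (2 ^ n) = 0.
Proof.
  set (thr := fun i => T i * c * exp (T i * c) / Wscale (a i) (T i)).
  assert (Hthr : forall i, (i < N)%nat -> 0 <= thr i).
  { intros i Hi. pose proof (Wscale_pos _ (T i) (a_pos i Hi)). pose proof c_pos.
    pose proof (T_nonneg i Hi). pose proof (exp_pos (T i * c)).
    apply Rmult_le_pos; [apply Rmult_le_pos; [apply Rmult_le_pos |] |
      apply Rlt_le, Rinv_0_lt_compat]; lra. }
  destruct (INR_unbounded (sumN thr N)) as [n Hn].
  exists n.
  assert (Hpow : INR n < 2 ^ n).
  { replace (2 ^ n) with (INR (2 ^ n)) by (rewrite pow_INR; reflexivity).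
    apply lt_INR, Nat.pow_gt_lin_r. lia. }
  rewrite Ssum_eq_Sext by (apply pow_lt; lra).
  rewrite <- (sumN_const_0 N). apply sumN_ext. intros i Hi.
  pose proof (Wscale_pos _ (T i) (a_pos i Hi)).
  apply Pstar_ext_large; [apply a_pos | apply T_nonneg |]; [assumption.. |].
  pose proof (sumN_ge_term thr N i Hthr Hi).
  replace (T i * c * exp (T i * c)) with (thr i * Wscale (a i) (T i)) by (unfold thr; field; lra).
  apply Rmult_lt_compat_r; lra.
Qed.

Lemma Ssum_bis_mid_error Ptot m :
  Ptot < sumN (fun i => Pbar (a i) (T i)) N -> Ssum N a T (2 ^ m) <= Ptot ->
  forall k, Rabs (Ssum N a T (bis_mid (Ssum N a T) Ptot (2 ^ m) k) - Ptot)
            <= Slip * 2 ^ m / 2 ^ k.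
Proof.
  intros Hlt Hm. assert (Hpow : 0 < 2 ^ m) by (apply pow_lt; lra).
  apply bis_mid_error with (Scont := Sext).
  - exact Ssum_eq_Sext.
  - exact Hpow.
  - exact Slip_nonneg.
  - exact Sext_lipschitz.
  - now rewrite Sext_0.
  - now rewrite <- Ssum_eq_Sext.
Qed.

End Channels.

Theorem theorem3 (N : nat) (a T : nat -> R) (Ptot : R)
  (HN : (1 <= N)%nat)
  (Ha : forall i, (i < N)%nat -> 0 < a i)
  (HT : forall i, (i < N)%nat -> 0 <= T i)
  (HP : 0 < Ptot)
  (Hlt : Ptot < sumN (fun i => Pbar (a i) (T i)) N)
  (Hch : exists i, (i < N)%nat /\ 0 < a i /\ 0 < T i) :
  (* the doubling phase terminates: lambda_hi = 2^m with m the first index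
     such that S(2^m) <= Ptot *)
  (exists m : nat, Ssum N a T (2 ^ m) <= Ptot /\
     forall j : nat, (j < m)%nat -> Ptot < Ssum N a T (2 ^ j)) /\
  forall m : nat,
    Ssum N a T (2 ^ m) <= Ptot ->
    (forall j : nat, (j < m)%nat -> Ptot < Ssum N a T (2 ^ j)) ->
    exists C eps0 : R, 0 < C /\ 0 < eps0 /\
    forall eps : R, 0 < eps ->
      (* the bisection stops after K iterations (first K with
         |S(lambda) - Ptot| < eps) ... *)
      exists K : nat, (1 <= K)%nat /\
        Rabs (Ssum N a T (bis_mid (Ssum N a T) Ptot (2 ^ m) (K - 1)) - Ptot) < eps /\
        (forall k : nat, (k < K - 1)%nat ->
           eps <= Rabs (Ssum N a T (bis_mid (Ssum N a T) Ptot (2 ^ m) k) - Ptot)) /\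
        (* ... with K = O(log(1/eps)) and total number of Lambert W
           evaluations (N per evaluation of S, over the m+1 doubling checks and
           K bisection iterations) O(N log(1/eps)) *)
        (eps < eps0 ->
           INR K <= C * ln (1 / eps) /\
           INR (N * (m + 1 + K)) <= C * INR N * ln (1 / eps)).
Proof.
  split.
  - destruct (Ssum_pow2_eventually_0 N a T Ha HT) as [n Hn].
    destruct (first_index (fun m => Ssum N a T (2 ^ m) <= Ptot) n) as [m [Hm [_ Hmin]]];
      [lra |].
    exists m. split; [assumption |]. intros j Hj. apply Rnot_le_lt. now apply Hmin.
  - intros m Hm _.
    set (A := Slip N a T * 2 ^ m).
    assert (HA : 0 <= A)
      by (apply Rmult_le_pos; [apply Slip_nonneg | apply pow_le; lra]; assumption).
    pose proof (Ssum_bis_mid_error N a T Ha HT Ptot m Hlt Hm) as Herr.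
    pose proof c_pos as Hln2. unfold c in Hln2.
    assert (0 < 2 / ln 2) by (apply Rdiv_lt_0_compat; lra).
    pose proof (pos_INR m) as Hm0.
    exists (2 / ln 2 + 3 + INR m), (Rmin (/ exp 1) (/ (A + 1))).
    split; [lra |]. split; [apply Rmin_pos; apply Rinv_0_lt_compat; [apply exp_pos | lra] |].
    intros eps Heps.
    destruct (first_hit_count A _ HA Herr eps Heps) as [K [HK [Hhit [Hmiss Hcount]]]].
    exists K. split; [| split; [| split]]; try assumption.
    intros Hsmall. specialize (Hcount Hsmall).
    destruct (ln_inv_small_bounds (A + 1) eps) as [Hl _]; try lra; try assumption.
    set (l := ln (1 / eps)) in *.
    assert (Hdoubling : INR m + 1 <= (INR m + 1) * l) by nra.
    assert (Htotal : INR m + 1 + INR K <= (2 / ln 2 + 3 + INR m) * l) by lra.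
    split; [nra |].
    rewrite mult_INR, !plus_INR, (Rmult_comm _ (INR N)), Rmult_assoc.
    apply Rmult_le_compat_l; [apply pos_INR | exact Htotal].
Qed.
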